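(* Let $Q$ be a commutative Moufang loop with multiplication group $\mathfrak M$. Then the center $Z(\mathfrak M)$ of $\mathfrak M$ is exactly $\{L(a): a\in Z(Q)\}$, and the map $a\mapsto L(a)$ is an isomorphism from $Z(Q)$ onto $Z(\mathfrak M)$.
   Context: A commutative Moufang loop is a commutative loop $(Q,\cdot)$ with identity $1$ satisfying $x^2\cdot yz=xy\cdot xz$. The translation $L(x)$ is $y\mapsto xy$; $\mathfrak M$ is the permutation group of $Q$ generated by all $L(x)$. The center of $Q$ is $Z(Q)=\{x\in Q: x\cdot yz=xy\cdot z\ \forall y,z\in Q\}$. *)

Set Implicit Arguments.

Section CML.
Variables (Q : Type) (mul : Q -> Q -> Q) (one : Q).

(* Q is a loop with identity [one]: for all x z, x*y = z has a unique solution y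
   (and since the loop is commutative, so does y*x = z). *)
Definition is_CML : Prop :=
  (forall x, mul one x = x) /\ (forall x, mul x one = x) /\
  (forall x z, exists y, mul x y = z /\ forall y', mul x y' = z -> y' = y) /\
  (forall x y, mul x y = mul y x) /\
  (forall x y z, mul (mul x x) (mul y z) = mul (mul x y) (mul x z)).

Definition Ltr (x : Q) : Q -> Q := fun y => mul x y.

(* The multiplication group M: the permutations of Q generated by all L(x),
   i.e. the closure of the identity under left composition with L(x) and L(x)^{-1}. *)
Inductive inMult : (Q -> Q) -> Prop :=
| inMult_id : inMult (fun y => y)
| inMult_L x f : inMult f -> inMult (fun y => Ltr x (f y))
| inMult_Linv x g f :
    (forall y, Ltr x (g y) = y) -> (forall y, g (Ltr x y) = y) ->
    inMult f -> inMult (fun y => g (f y)).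

Definition centerQ (a : Q) : Prop :=
  forall y z, mul a (mul y z) = mul (mul a y) z.

Definition centerM (f : Q -> Q) : Prop :=
  inMult f /\ forall g, inMult g -> forall y, f (g y) = g (f y).
End CML.

From Stdlib Require Import FunctionalExtensionality.

Set Implicit Arguments.

(* The argument uses only commutativity and the identity element.  Let f be central in M.  Since f commutes
   with every translation L(y), f(y) = f(L(y) 1) = y f(1), so f = L(a)
   with a = f(1).  Commuting with L(z) then says a(zy) = z(ay), which
   by commutativity is the associativity law a(yz) = (ay)z, i.e. a is
   central in Q.  Conversely, if a is central then L(a) commutes with
   every L(x), hence with every L(x)^{-1}, hence (by induction on the
   generation of M) with every element of M.  Injectivity of a |-> L(a)
   comes from evaluating at 1, and the homomorphism property
   L(ab) = L(a)L(b) is the centrality of a read backwards. *)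

Lemma Ltr_inMult (Q : Type) (mul : Q -> Q -> Q) (x : Q) :
  inMult mul (fun y => Ltr mul x y).
Proof. exact (inMult_L x (inMult_id mul)). Qed.

Section CommutativeMagma.
Variables (Q : Type) (mul : Q -> Q -> Q) (one : Q).
Hypothesis mul_1r : forall x, mul x one = x.
Hypothesis mulC : forall x y, mul x y = mul y x.

Lemma centerQ_swap (a : Q) :
  centerQ mul a -> forall x z, mul a (mul x z) = mul x (mul a z).
Proof.
  intros Ha x z.
  rewrite (mulC x (mul a z)), <- Ha, (mulC z x).
  reflexivity.
Qed.

(* The translation by a central element commutes with the whole of M:
   it commutes with each L(x) by [centerQ_swap], hence with each L(x)^{-1},
   and these generate M. *)
Lemma Ltr_center_commutes (a : Q) :
  centerQ mul a ->
  forall g, inMult mul g -> forall y, Ltr mul a (g y) = g (Ltr mul a y).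
Proof.
  intros Ha g Hg.
  induction Hg as [| x g _ IH | x ginv g ginv_right ginv_left _ IH]; intro y.
  - reflexivity.
  - unfold Ltr in *. rewrite centerQ_swap, IH by exact Ha. reflexivity.
  - (* a * ginv w = ginv (a * w), obtained by applying ginv to x(a ginv w) = a w *)
    unfold Ltr in *. rewrite <- IH.
    set (w := g y).
    rewrite <- (ginv_left (mul a (ginv w))).
    f_equal. rewrite <- centerQ_swap, ginv_right by exact Ha. reflexivity.
Qed.

Lemma commutes_with_Ltr_is_Ltr (f : Q -> Q) :
  (forall z y, f (Ltr mul z y) = Ltr mul z (f y)) ->
  forall y, f y = Ltr mul (f one) y.
Proof.
  intros Hf y. unfold Ltr in *.
  transitivity (f (mul y one)); [now rewrite mul_1r |].
  rewrite Hf. apply mulC.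
Qed.

(* If L(a) commutes with all left translations, then a is central:
   a(yz) = a(zy) = z(ay) = (ay)z. *)
Lemma Ltr_commutes_centerQ (a : Q) :
  (forall z y, Ltr mul a (Ltr mul z y) = Ltr mul z (Ltr mul a y)) ->
  centerQ mul a.
Proof.
  intros Ha y z. unfold Ltr in Ha.
  rewrite (mulC y z), Ha, (mulC z). reflexivity.
Qed.

Lemma centerM_iff_Ltr_center (f : Q -> Q) :
  centerM mul f <-> exists a, centerQ mul a /\ forall y, f y = Ltr mul a y.
Proof.
  split.
  - intros [_ Hf].
    assert (HfL : forall z y, f (Ltr mul z y) = Ltr mul z (f y))
      by (intros z y; exact (Hf _ (Ltr_inMult mul z) y)).
    pose proof (commutes_with_Ltr_is_Ltr f HfL) as Hfa.
    exists (f one). split; [| exact Hfa].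
    apply Ltr_commutes_centerQ. intros z y.
    rewrite <- !Hfa. apply HfL.
  - intros [a [Ha Hfa]].
    replace f with (fun y => Ltr mul a y) by (symmetry; extensionality y; apply Hfa).
    split; [apply Ltr_inMult | exact (Ltr_center_commutes Ha)].
Qed.

Lemma Ltr_injective (a b : Q) :
  (forall y, Ltr mul a y = Ltr mul b y) -> a = b.
Proof.
  intro E. specialize (E one). unfold Ltr in E.
  rewrite !mul_1r in E. exact E.
Qed.

End CommutativeMagma.

Lemma Ltr_mul_center (Q : Type) (mul : Q -> Q -> Q) (a b : Q) :
  centerQ mul a -> forall y, Ltr mul (mul a b) y = Ltr mul a (Ltr mul b y).
Proof. intros Ha y. unfold Ltr. symmetry. apply Ha. Qed.

Theorem mainTheorem6 (Q : Type) (mul : Q -> Q -> Q) (one : Q) :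
  is_CML mul one ->
  (* Z(M) = { L(a) : a in Z(Q) } *)
  (forall f : Q -> Q,
      centerM mul f <-> exists a, centerQ mul a /\ forall y, f y = Ltr mul a y) /\
  (* a |-> L(a) is injective on Z(Q) *)
  (forall a b, centerQ mul a -> centerQ mul b ->
      (forall y, Ltr mul a y = Ltr mul b y) -> a = b) /\
  (* and a homomorphism Z(Q) -> Z(M) *)
  (forall a b, centerQ mul a -> centerQ mul b ->
      forall y, Ltr mul (mul a b) y = Ltr mul a (Ltr mul b y)).
Proof.
  intros [_ [mul_1r [_ [mulC _]]]].
  split; [| split].
  - exact (centerM_iff_Ltr_center mul one mul_1r mulC).
  - intros a b _ _. exact (Ltr_injective mul one mul_1r a b).
  - intros a b Ha _. exact (Ltr_mul_center b Ha).
Qed.
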